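(* Greedy retrieve actions are optimal: let $s_t$ be a state in which the current color $p_t\neq 0$ and there exists a lane $i\in\{1,\dots,L\}$ whose front (rightmost) car has color $B_{t,i,W}=p_t$. Then the retrieve action $a^*=i$ is optimal in $s_t$, i.e., the maximum cumulative reward over all valid action sequences starting in $s_t$ (and leading to the terminal state where upstream sequence and buffer are empty) is attained by a sequence whose first action is $a^*$.
   Context: Paint shop problem with a multi-lane buffer: an upstream sequence of cars with colors in $\{1,\dots,C\}$ is processed in order; the buffer has $L$ lanes, each a first-in-first-out queue of capacity $W$, with $B_{t,i,j}\in\{0,\dots,C\}$ the color at position $j$ of lane $i$ at time $t$ (0 = empty, position $W$ is the front/exit of the lane, new cars enter at the rightmost empty position). $e_{t,1}$ is the color of the next upstream car (0 if the upstream sequence is empty), and $p_t\in\{0,\dots,C\}$ is the color of the last car appended to the downstream sequence (0 initially). Actions: $a\in\{1,\dots,L\}$ retrieves the front car of lane $a$ and appends it to the downstream sequence (setting $p_{t+1}=B_{t,a,W}$); $a\in\{L+1,\dots,2L\}$ stores the next upstream car in lane $a-L$ (leaving $p$ unchanged). Reward: $r(s_t,a)=1$ for a valid retrieval with $B_{t,a,W}=p_t$; $0$ for a valid retrieval with $B_{t,a,W}\neq p_t$; $0$ for a valid store; $-10$ for an invalid action (retrieving from an empty lane, storing into a full lane, or storing when the upstream sequence is empty). The cumulative reward of actions $a_1,\dots,a_n$ from state $s_0$ is $r(s_0,a_1,\dots,a_n)=\sum_{t=0}^{n-1} r(s_t,a_{t+1})$, where $s_{t+1}$ results from applying $a_{t+1}$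 in $s_t$. An action $a^*$ is optimal in $s_t$ if $\max_{a_1,\dots,a_n}r(s_t,a^*,a_1,\dots,a_n)\ge r(s_t,a',a'_1,\dots,a'_n)$ for all actions $a',a'_1,\dots,a'_n$. *)

From mathcomp Require Import all_boot all_order all_algebra.
Set Implicit Arguments. Unset Strict Implicit. Unset Printing Implicit Defensive.
Import Order.TTheory GRing.Theory Num.Theory.

(* A state with L lanes.
   - [lanes s i] : contents of lane i as a FIFO queue; the HEAD of the list is
     the front car (position W, the exit), the LAST element is the most
     recently stored car (cars are packed towards the exit; 0 = empty slots
     are not represented).
   - [upstream s] : remaining upstream sequence, head = next car e_{t,1}.
   - [cur s] : p_t, colour of the last car appended downstream (0 initially). *)
Record state (L : nat) := mkState {
  lanes : {ffun 'I_L -> seq nat};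
  upstream : seq nat;
  cur : nat }.

(* Actions: [Retrieve i] is a = i+1, [Store i] is a = L+i+1 (0-based lanes). *)
Inductive action (L : nat) := Retrieve of 'I_L | Store of 'I_L.

Definition upd_lane L (f : {ffun 'I_L -> seq nat}) (i : 'I_L) (q : seq nat) :=
  [ffun j => if j == i then q else f j].

Definition wf_state (C W L : nat) (s : state L) : bool :=
  [&& all (fun c => 0 < c <= C) (upstream s),
      [forall i, all (fun c => 0 < c <= C) (lanes s i) && (size (lanes s i) <= W)]
    & cur s <= C].

Definition valid_action (W L : nat) (s : state L) (a : action L) : bool :=
  match a with
  | Retrieve i => lanes s i != [::]
  | Store i => (upstream s != [::]) && (size (lanes s i) < W)
  end.

Definition step (W L : nat) (s : state L) (a : action L) : state L * int :=
  match a with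
  | Retrieve i =>
      match lanes s i with
      | [::] => (s, (-10)%R)
      | c :: q => (mkState (upd_lane (lanes s) i q) (upstream s) c,
                   if c == cur s then 1%R else 0%R)
      end
  | Store i =>
      match upstream s with
      | [::] => (s, (-10)%R)
      | c :: u =>
          if size (lanes s i) < W
          then (mkState (upd_lane (lanes s) i (rcons (lanes s i) c)) u (cur s), 0%R)
          else (s, (-10)%R)
      end
  end.

Fixpoint cum_reward (W L : nat) (s : state L) (acts : seq (action L)) : int :=
  match acts with
  | [::] => 0%R
  | a :: r => ((step W s a).2 + cum_reward W (step W s a).1 r)%R
  end.

Fixpoint final_state (W L : nat) (s : state L) (acts : seq (action L)) : state L :=
  match acts with
  | [::] => s
  | a :: r => final_state W (step W s a).1 r
  end.

Fixpoint valid_seq (W L : nat) (s : state L) (acts : seq (action L)) : bool :=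
  match acts with
  | [::] => true
  | a :: r => valid_action W s a && valid_seq W (step W s a).1 r
  end.

Definition terminal L (s : state L) : bool :=
  (upstream s == [::]) && [forall i, lanes s i == [::]].

From mathcomp Require Import all_boot all_order all_algebra.
From mathcomp Require Import zify.
Import Order.TTheory GRing.Theory Num.Theory.

(* After the greedy retrieval, the buffer is the old one without the front car x
   of lane i, and the current colour is already x.  Any action sequence from the
   old state can be replayed from the new one by skipping the retrieval of x.
   If c is the current colour at that moment, the skipped step earned [x == c]
   and set the colour to x, whereas the replay keeps c, which changes later
   rewards by at most [x != c]; so the replay loses at most 1, exactly what the greedy step earned.  Finally,
   dropping invalid actions (reward -10) only helps, and a valid sequence can
   always be completed to the terminal state without negative rewards. *)

Set Implicit Arguments. Unset Strict Implicit.

Section ActionSequences.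

Variables (W L : nat).
Implicit Types (t : state L) (a : action L) (r : seq (action L)).

Lemma upd_laneE (f : {ffun 'I_L -> seq nat}) i q j :
  upd_lane f i q j = if j == i then q else f j.
Proof. by rewrite ffunE. Qed.

Lemma step_invalid t a : ~~ valid_action W t a -> step W t a = (t, (-10)%R).
Proof.
case: a => j /=; first by case: (lanes t j).
by case: (upstream t) => [|c u] //= /negbTE ->.
Qed.

Lemma step_reward_ge0 t a : valid_action W t a -> (0 <= (step W t a).2)%R.
Proof.
case: a => j /=; first by case: (lanes t j) => [|c q] //= _; case: eqP.
by case: (upstream t) => [|c u] //= ->.
Qed.

Lemma cum_reward_cat t r1 r2 :
  cum_reward W t (r1 ++ r2) =
  (cum_reward W t r1 + cum_reward W (final_state W t r1) r2)%R.
Proof. by elim: r1 t => [|a r IH] t /=; rewrite ?add0r // IH addrA. Qed.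

Lemma valid_seq_cat t r1 r2 :
  valid_seq W t (r1 ++ r2) =
  valid_seq W t r1 && valid_seq W (final_state W t r1) r2.
Proof. by elim: r1 t => [|a r IH] t //=; rewrite IH andbA. Qed.

Lemma final_state_cat t r1 r2 :
  final_state W t (r1 ++ r2) = final_state W (final_state W t r1) r2.
Proof. by elim: r1 t => [|a r IH] t //=. Qed.

Lemma cum_reward_ge0 t r : valid_seq W t r -> (0 <= cum_reward W t r)%R.
Proof.
elim: r t => [|a r IH] t //= /andP[va vr].
by rewrite addr_ge0 ?IH ?step_reward_ge0.
Qed.

Lemma valid_seq_dominates t r :
  exists2 r', valid_seq W t r' & (cum_reward W t r <= cum_reward W t r')%R.
Proof.
elim: r t => [|a r IH] t /=; first by exists [::].
have [va | ia] := boolP (valid_action W t a).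
  have [r' vr' le_r] := IH (step W t a).1.
  by exists (a :: r'); rewrite /= ?va ?lerD2l.
have [r' vr' le_r] := IH t.
exists r' => //; rewrite step_invalid //=; lia.
Qed.

End ActionSequences.

Section Simulation.

Variables (W L : nat).
Implicit Types (t : state L) (r : seq (action L)).

Lemma cum_reward_change_cur (f : {ffun 'I_L -> seq nat}) u c1 c2 r :
  (cum_reward W (mkState f u c1) r <=
   cum_reward W (mkState f u c2) r + (c1 != c2)%:Z)%R.
Proof.
elim: r f u c1 => [|[] j r IH] f u c1 /=; first by case: eqP.
- case: (f j) => [|c q] /=; first by have := IH f u c1; lia.
  by case: (c =P c1); case: (c =P c2); case: (c1 =P c2) => *; subst; lia.
- case: u => [|c u] /=; first by have := IH f [::] c1; lia.
  case: ifP => _ /=; last by have := IH f (c :: u) c1; lia.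
  by have := IH (upd_lane f j (rcons (f j) c)) u c1; lia.
Qed.

Definition extra_front_car (i : 'I_L) (x : nat) t t' :=
  [/\ upstream t = upstream t', cur t = cur t' &
      forall k, lanes t k = if k == i then x :: lanes t' k else lanes t' k].

Lemma extra_front_car_simulation i x r t t' :
  extra_front_car i x t t' ->
  exists r', (cum_reward W t r <= cum_reward W t' r' + 1)%R.
Proof.
elim: r t t' => [|a r IH] t t' rel /=; first by exists [::].
have [va | ia] := boolP (valid_action W t a); last first.
  have [r' le_r] := IH t t' rel.
  by exists r'; rewrite step_invalid //=; lia.
case: rel => eq_u eq_c eq_l.
case: a va => j /=.
- have [-> _ | ne_ji] := eqVneq j i.
    rewrite eq_l eqxx /=; exists r.
    have -> : upd_lane (lanes t) i (lanes t' i) = lanes t'.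
      by apply/ffunP => k; rewrite upd_laneE eq_l; case: eqP => [->|].
    have := cum_reward_change_cur (lanes t') (upstream t') x (cur t') r.
    have -> : mkState (lanes t') (upstream t') (cur t') = t' by case: t' eq_u eq_c eq_l.
    by rewrite eq_u eq_c; case: eqP; lia.
  rewrite eq_l (negbTE ne_ji); case E: (lanes t' j) => [|c q] //= _.
  have [|r' le_r] := IH (mkState (upd_lane (lanes t) j q) (upstream t) c)
                        (mkState (upd_lane (lanes t') j q) (upstream t') c).
    by split=> //= k; rewrite !upd_laneE eq_l; case: eqP => [->|]; rewrite ?(negbTE ne_ji).
  by exists (Retrieve j :: r'); rewrite /= E /= eq_c; case: eqP; lia.
- case Eu: (upstream t) => [|c u] //= lt_tj.
  have lt_t'j : size (lanes t' j) < W by move: lt_tj; rewrite eq_l; case: eqP => /=; lia.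
  rewrite lt_tj.
  have [|r' le_r] := IH (mkState (upd_lane (lanes t) j (rcons (lanes t j) c)) u (cur t))
                        (mkState (upd_lane (lanes t') j (rcons (lanes t' j) c)) u (cur t')).
    by split=> //= k; rewrite !upd_laneE !eq_l; case: (k =P j) => [->|]; case: (j == i).
  by exists (Store j :: r'); rewrite /= -eq_u Eu lt_t'j /=; lia.
Qed.

End Simulation.

Section Completion.

Variables (W L : nat) (i0 : 'I_L).
Hypothesis W_gt0 : 0 < W.
Implicit Types (t : state L) (a : action L) (r : seq (action L)).

(* Every upstream car still needs a store and a retrieval. *)
Definition pending_moves t := 2 * size (upstream t) + \sum_k size (lanes t k).

Lemma sum_size_upd_lane (f : {ffun 'I_L -> seq nat}) j q :
  \sum_k size (upd_lane f j q k) + size (f j) = \sum_k size (f k) + size q.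
Proof.
rewrite (bigD1 j) // [in RHS](bigD1 j) //= upd_laneE eqxx.
rewrite (eq_bigr (fun k => size (f k))) => [|k /negbTE nkj]; last by rewrite upd_laneE nkj.
by rewrite addnAC [RHS]addnAC [size q + _]addnC.
Qed.

Lemma exists_progress_action t :
  ~~ terminal t ->
  exists2 a, valid_action W t a & pending_moves (step W t a).1 < pending_moves t.
Proof.
rewrite /pending_moves => nterm.
case: (pickP (fun k => lanes t k != [::])) => [j | empty_lanes].
  case E: (lanes t j) => [|c q] // _; exists (Retrieve j); rewrite /= E //=.
  by have := sum_size_upd_lane (lanes t) j q; rewrite E /=; lia.
have {}empty_lanes k : lanes t k = [::] by apply/eqP/negbFE/empty_lanes.
case Eu: (upstream t) nterm => [|c u].
  by rewrite /terminal Eu eqxx /=; case/forallPn => k; rewrite empty_lanes.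
exists (Store i0); rewrite /= Eu empty_lanes W_gt0 //=.
by have := sum_size_upd_lane (lanes t) i0 [:: c]; rewrite empty_lanes /=; lia.
Qed.

Lemma exists_valid_completion t :
  exists r, valid_seq W t r && terminal (final_state W t r).
Proof.
move: {2}(pending_moves t).+1 (ltnSn (pending_moves t)) => n.
elim: n t => // n IH t lt_pending.
have [term | /exists_progress_action[a va lt_a]] := boolP (terminal t).
  by exists [::]; rewrite /= term.
have [r /andP[vr term]] := IH (step W t a).1 (leq_trans lt_a lt_pending).
by exists (a :: r); rewrite /= va vr.
Qed.

Lemma exists_dominating_completion t r :
  exists r', [/\ valid_seq W t r', terminal (final_state W t r')
              & (cum_reward W t r <= cum_reward W t r')%R].
Proof.
have [r1 vr1 le_r1] := valid_seq_dominates W t r.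
have [r2 /andP[vr2 term]] := exists_valid_completion (final_state W t r1).
exists (r1 ++ r2); rewrite valid_seq_cat final_state_cat cum_reward_cat vr1 vr2.
by split=> //; have := cum_reward_ge0 vr2; lia.
Qed.

End Completion.

Theorem theorem2 (C L W : nat) (s : state L) (i : 'I_L) :
  wf_state C W s ->
  cur s != 0 ->
  ohead (lanes s i) = Some (cur s) ->
  forall (a' : action L) (acts' : seq (action L)),
  exists rest : seq (action L),
    [/\ valid_seq W s (Retrieve i :: rest),
        terminal (final_state W s (Retrieve i :: rest))
      & (cum_reward W s (a' :: acts') <= cum_reward W s (Retrieve i :: rest))%R].
Proof.
move=> /and3P[_ /forallP/(_ i)/andP[_ size_i] _] _ front_i a' acts'.
case E: (lanes s i) front_i size_i => [|p q] //= [p_cur] size_i.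
have W_gt0 : 0 < W by apply: leq_trans size_i.
set t := mkState (upd_lane (lanes s) i q) (upstream s) p.
have rel : extra_front_car i p s t.
  by split=> //= k; rewrite upd_laneE; case: eqP => [->|]; rewrite ?E.
have [r1 le_r1] := extra_front_car_simulation W (a' :: acts') rel.
have [rest [valid_rest term le_rest]] := exists_dominating_completion i W_gt0 t r1.
exists rest; rewrite /= E /= -p_cur eqxx -/t valid_rest; split=> //.
by move: le_r1 le_rest => /=; lia.
Qed.
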